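(* Let $d$ be a positive integer and $H$ a complex Hilbert space. Let $T=(T_1,\ldots,T_d)$ be a commuting operator-valued multishift on $\ell^2_H(\mathbb N^d)$ with unitary operator weights $\{A^{(j)}_\alpha:\alpha\in\mathbb N^d,\ j=1,\ldots,d\}$. Then $T$ satisfies the von Neumann's inequality, i.e. $\|p(T)\|\le\sup_{z\in\mathbb D^d}|p(z)|$ for every polynomial $p\in\mathbb C[z_1,\ldots,z_d]$.
   Context: $\mathbb N$ denotes the nonnegative integers; $\varepsilon_j\in\mathbb N^d$ has $1$ in the $j$-th place and $0$ elsewhere; $\mathbb D^d$ is the open unit polydisc. $\ell^2_H(\mathbb N^d)=\bigoplus_{\alpha\in\mathbb N^d}H$. Given bounded operators $A^{(j)}_\alpha:H\to H$, the operator-valued multishift with these operator weights is the $d$-tuple defined by $T_j(\oplus_\alpha x_\alpha)=\oplus_\alpha A^{(j)}_{\alpha-\varepsilon_j}x_{\alpha-\varepsilon_j}$ (the term being $0$ when $\alpha_j=0$). It is a commuting operator-valued multishift if $\sup_\alpha\|A^{(j)}_\alpha\|<\infty$ for each $j$ and $A^{(i)}_{\alpha+\varepsilon_j}A^{(j)}_\alpha=A^{(j)}_{\alpha+\varepsilon_i}A^{(i)}_\alpha$ for all $\alpha$ and all $i,j$. For $p(z)=\sum a_\alpha z^\alpha$, $p(T)=\sum a_\alpha T_1^{\alpha_1}\cdots T_d^{\alpha_d}$. *)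

From HB Require Import structures.
From mathcomp Require Import all_boot all_order all_algebra.
From mathcomp Require Import mpoly.
From mathcomp Require Import all_classical all_reals all_analysis.
From mathcomp Require Import complex.

Set Implicit Arguments.
Unset Strict Implicit.
Unset Printing Implicit Defensive.

Import Order.TTheory GRing.Theory Num.Theory.
Local Open Scope ring_scope.
Local Open Scope classical_set_scope.

Definition cabs (R : realType) (z : R[i]) : R := Normc.normc z.

Section Hilbert.
Variables (R : realType) (H : lmodType R[i]) (ip : H -> H -> R[i]).

Definition hnorm2 (x : H) : R := complex.Re (ip x x).

Definition inner_product : Prop :=
  [/\ (forall (a : R[i]) (x y z : H), ip (a *: x + y) z = a * ip x z + ip y z),
      (forall x y : H, ip x y = (ip y x)^*),
      (forall x : H, 0 <= ip x x) &
      (forall x : H, ip x x = 0 -> x = 0)].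

Definition complete_ip : Prop :=
  forall u : nat -> H,
    (forall e : R, 0 < e -> exists N : nat, forall m n : nat,
        (N <= m)%N -> (N <= n)%N -> hnorm2 (u m - u n) < e) ->
    exists l : H, forall e : R, 0 < e -> exists N : nat, forall n : nat,
        (N <= n)%N -> hnorm2 (u n - l) < e.

Definition hilbert_space : Prop := inner_product /\ complete_ip.

Definition unitary (U : H -> H) : Prop :=
  [/\ (forall (a : R[i]) (x y : H), U (a *: x + y) = a *: U x + U y),
      (exists M : R, forall x : H, hnorm2 (U x) <= M * hnorm2 x) &
      (exists V : H -> H, [/\ (forall x y : H, ip (U x) y = ip x (V y)),
                             cancel U V & cancel V U])].

(* Multi-indices in N^d are multinomials 'X_{1..d}; eps_j = mnm1 j. *)
Variable d : nat.
Local Notation mi := (mpoly.multinom d).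

Definition commuting_multishift (A : 'I_d -> mi -> H -> H) : Prop :=
  (forall j : 'I_d, exists M : R, forall (a : mi) (x : H),
      hnorm2 (A j a x) <= M * hnorm2 x) /\
  (forall (i j : 'I_d) (a : mi) (x : H),
      A i (mpoly.mnm_add a (mpoly.mnm1 j)) (A j a x) =
      A j (mpoly.mnm_add a (mpoly.mnm1 i)) (A i a x)).

Variable A : 'I_d -> mi -> H -> H.

Definition mshift (j : 'I_d) (x : mi -> H) : mi -> H :=
  fun a => if (mpoly.fun_of_multinom a j == 0)%N then 0
           else A j (mpoly.mnm_sub a (mpoly.mnm1 j))
                    (x (mpoly.mnm_sub a (mpoly.mnm1 j))).

Definition mshift_pow (m : mi) (x : mi -> H) : mi -> H :=
  foldr (fun j y => iter (mpoly.fun_of_multinom m j) (mshift j) y) x (enum 'I_d).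

Definition poly_shift (p : mpoly.mpoly d R[i]) (x : mi -> H) : mi -> H :=
  fun a => \sum_(m <- mpoly.msupp p) mpoly.mcoeff m p *: mshift_pow m x a.

Definition l2norm2 (x : mi -> H) : \bar R :=
  esum (@setT mi) (fun a => (hnorm2 (x a))%:E).

Definition polydisc_sup (p : mpoly.mpoly d R[i]) : \bar R :=
  ereal_sup [set (cabs (mpoly.meval z p))%:E |
             z in [set z : 'I_d -> R[i] | forall j, cabs (z j) < 1]].

(* von Neumann's inequality ||p(T)|| <= sup_{D^d} |p|, with the operator  *)
(* norm unfolded: ||p(T) x||^2 <= (sup |p|)^2 ||x||^2 for x in l^2_H.     *)
Definition von_neumann_ineq : Prop :=
  forall (p : mpoly.mpoly d R[i]) (x : mi -> H),
    (l2norm2 x < +oo)%E ->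
    (l2norm2 (poly_shift p x) <= polydisc_sup p * polydisc_sup p * l2norm2 x)%E.

End Hilbert.

(* Unitarity of the weights lets us untwist T.  Composing the weights along a
   lattice path from 0 to a gives an operator B_a which, thanks to the
   commutation relations, does not depend on the path; B_a is unitary and
   y |-> (B_a y_a)_a is a unitary of l^2_H(N^d) intertwining T with the
   multishift S with identity weights, (S^m y)_a = y_(a-m).  So it suffices to
   prove the inequality for S.
   If y is supported in the box [0,n)^d, then p(S)y is supported in [0,M)^d
   with M = n + deg p + 1, and the box sums Y(z) = sum_(a in [0,M)^d) z^a y_a
   turn p(S) into multiplication by p(z).  Evaluating at the grid points
   z = (r zeta^(t_i))_i, with zeta a primitive M-th root of unity and
   0 < r < 1, and using the orthogonality of the characters of (Z/M)^d gives
   sum_a r^(2|a|) |(p(S)y)_a|^2 <= (sup_(D^d) |p|)^2 sum_a |y_a|^2.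
   Letting r -> 1 and truncating arbitrary y to boxes concludes. *)

From Pilot Require Import Defs.
From HB Require Import structures.
From mathcomp Require Import all_boot all_order all_algebra.
From mathcomp Require Import mpoly.
From mathcomp Require Import all_classical all_reals all_analysis.
From mathcomp Require Import complex.
From mathcomp Require Import zify.
From mathcomp Require Import cyclic separable cyclotomic.

Set Implicit Arguments.
Unset Strict Implicit.
Unset Printing Implicit Defensive.

Import Order.TTheory GRing.Theory Num.Theory numFieldNormedType.Exports.
Local Open Scope classical_set_scope.
Local Open Scope complex_scope.
Local Open Scope ring_scope.

Section Modulus.
Variable R : realType.

Lemma normc_cabs (c : R[i]) : `|c| = (cabs c)%:C.
Proof. by rewrite normc_def; case: c. Qed.

Lemma cabs_ge0 (c : R[i]) : 0 <= cabs c.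
Proof. by rewrite -lecR -normc_cabs normr_ge0. Qed.

Lemma cabs_real (r : R) : 0 <= r -> cabs r%:C = r.
Proof. by move=> r_ge0; apply: complexI; rewrite -normc_cabs ger0_norm ?ler0c. Qed.

End Modulus.

Section InnerProduct.
Variables (R : realType) (H : lmodType R[i]) (ip : H -> H -> R[i]).
Hypothesis ipP : inner_product ip.
Local Notation hnorm2 := (hnorm2 ip).

Lemma ipDZl a x y z : ip (a *: x + y) z = a * ip x z + ip y z.
Proof. by case: ipP. Qed.

Lemma ipC x y : ip x y = (ip y x)^*.
Proof. by case: ipP. Qed.

Lemma ip0l z : ip 0 z = 0.
Proof. by have := ipDZl (-1) 0 0 z; rewrite scaleN1r oppr0 addr0 mulN1r addNr. Qed.

Lemma ipZl a x z : ip (a *: x) z = a * ip x z.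
Proof. by rewrite -[a *: x]addr0 ipDZl ip0l addr0. Qed.

Lemma ipDl x y z : ip (x + y) z = ip x z + ip y z.
Proof. by have := ipDZl 1 x y z; rewrite scale1r mul1r. Qed.

Lemma ip_suml I (s : seq I) (F : I -> H) z :
  ip (\sum_(i <- s) F i) z = \sum_(i <- s) ip (F i) z.
Proof.
elim: s => [|a s IH]; first by rewrite !big_nil ip0l.
by rewrite !big_cons ipDl IH.
Qed.

Lemma ipZr a x z : ip z (a *: x) = a^* * ip z x.
Proof. by rewrite ipC ipZl rmorphM /= -ipC. Qed.

Lemma ip_sumr I (s : seq I) (F : I -> H) z :
  ip z (\sum_(i <- s) F i) = \sum_(i <- s) ip z (F i).
Proof. by rewrite ipC ip_suml rmorph_sum /=; apply: eq_bigr => i _; rewrite -ipC. Qed.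

Lemma ip_hnorm2 x : ip x x = (hnorm2 x)%:C.
Proof.
rewrite /Defs.hnorm2; have : 0 <= ip x x by case: ipP.
by case: (ip x x) => a b; rewrite lecE /= => /andP[/eqP -> _].
Qed.

Lemma hnorm2_ge0 x : 0 <= hnorm2 x.
Proof. by rewrite -lecR -ip_hnorm2; case: ipP. Qed.

Lemma hnorm20 : hnorm2 0 = 0.
Proof. by rewrite /Defs.hnorm2 ip0l. Qed.

Lemma hnorm2Z c x : hnorm2 (c *: x) = cabs c ^+ 2 * hnorm2 x.
Proof.
apply: complexI; rewrite -ip_hnorm2 ipZl ipZr mulrA -normCK normc_cabs.
by rewrite ip_hnorm2 rmorphM rmorphXn.
Qed.

Lemma parseval (T : finType) (I : eqType) (s : seq I) (c : T -> I -> R[i])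
    (w : R) (v : I -> H) :
  uniq s ->
  (forall a b, a \in s -> b \in s ->
     \sum_t c t a * (c t b)^* = (a == b)%:R * w%:C) ->
  \sum_t hnorm2 (\sum_(a <- s) c t a *: v a) = w * \sum_(a <- s) hnorm2 (v a).
Proof.
move=> s_uniq c_orth; apply: complexI; rewrite rmorphM !rmorph_sum /=.
transitivity (\sum_(a <- s) \sum_(b <- s) (\sum_t c t a * (c t b)^*) * ip (v a) (v b)).
  under eq_bigr do rewrite -ip_hnorm2 ip_suml.
  rewrite exchange_big; apply: eq_bigr => a _ /=.
  under eq_bigr do rewrite ipZl ip_sumr mulr_sumr.
  rewrite exchange_big; apply: eq_bigr => b _ /=.
  by rewrite mulr_suml; apply: eq_bigr => t _; rewrite ipZr mulrA.
rewrite mulr_sumr !big_seq; apply: eq_bigr => a sa.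
rewrite (bigD1_seq a) //= c_orth // eqxx mul1r -ip_hnorm2 big1_seq ?addr0 //.
move=> b /andP[ba sb].
by rewrite c_orth // eq_sym (negbTE ba) mul0r mul0r.
Qed.

End InnerProduct.

Section Multinomials.
Variable d : nat.
Implicit Types (a b m : 'X_{1..d}) (j : 'I_d).

Lemma submU1K a j : (0 < a j)%N -> (a - U_(j) + U_(j))%MM = a.
Proof. by move=> aj; rewrite submK // lep1mP -lt0n. Qed.

Lemma mdeg_submU1 a j : (0 < a j)%N -> mdeg a = (mdeg (a - U_(j))%MM).+1.
Proof. by move=> aj; rewrite -{1}(submU1K aj) mdegD mdeg1 addn1. Qed.

Lemma multinom_ind (P : 'X_{1..d} -> Prop) :
  P 0%MM -> (forall a j, P a -> P (a + U_(j))%MM) -> forall a, P a.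
Proof.
move=> P0 PS a; move: {2}(mdeg a) (erefl (mdeg a)) => n.
elim: n a => [|n IH] a Ea; first by move/eqP: Ea; rewrite mdeg_eq0 => /eqP ->.
case: (pickP (fun j => 0 < a j)%N) => [j aj|a0].
  by rewrite -(submU1K aj); apply/PS/IH; move: Ea; rewrite (mdeg_submU1 aj) => -[].
by move: Ea; rewrite mdegE big1 // => j _; apply/eqP; rewrite -leqn0 leqNgt a0.
Qed.

Lemma mnm_le_mdeg m j : (m j <= mdeg m)%N.
Proof. by rewrite mdegE (bigD1 j) //= leq_addr. Qed.

Definition box (M : nat) : seq 'X_{1..d} :=
  [seq [multinom (k i : nat) | i < d] | k : {ffun 'I_d -> 'I_M} <- enum predT].

Lemma box_uniq M : uniq (box M).
Proof.
rewrite map_inj_uniq ?enum_uniq // => k k' /mnmP kk'.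
by apply/ffunP => i; apply/val_inj; move: (kk' i); rewrite !mnmE.
Qed.

Lemma mem_boxP M a : reflect (forall i, (a i < M)%N) (a \in box M).
Proof.
apply: (iffP mapP) => [[k _ ->] i|aM]; first by rewrite mnmE ltn_ord.
exists [ffun i => Ordinal (aM i)]; first by rewrite mem_enum.
by apply/mnmP => i; rewrite mnmE ffunE.
Qed.

Lemma box_sub n M : (n <= M)%N -> {subset box n <= box M}.
Proof.
by move=> nM a /mem_boxP an; apply/mem_boxP => i; exact: leq_trans (an i) nM.
Qed.

Lemma sub_box (s : seq 'X_{1..d}) : {subset s <= box (\max_(a <- s) mdeg a).+1}.
Proof.
move=> a sa; apply/mem_boxP => i; rewrite ltnS (leq_trans (mnm_le_mdeg a i)) //.
exact: (@leq_bigmax_seq _ _ xpredT (fun m => mdeg m)).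
Qed.

Lemma mdeg_box M a : a \in box M -> (mdeg a <= d * M)%N.
Proof.
move/mem_boxP => aM; rewrite mdegE -[X in (_ <= X * M)%N]card_ord -sum_nat_const.
by apply: leq_sum => i _; exact: ltnW.
Qed.

Lemma msupp_box (R : nzRingType) (p : {mpoly R[d]}) m :
  m \in msupp p -> m \in box (msize p).
Proof.
move=> mp; apply/mem_boxP => i.
exact: leq_ltn_trans (mnm_le_mdeg m i) (msize_mdeg_lt mp).
Qed.

End Multinomials.

Lemma big_reindex_supp (V : nmodType) (I J : eqType) (s : seq I) (t : seq J)
    (h : J -> I) (F : I -> V) :
  uniq s -> uniq t -> injective h -> {subset map h t <= s} ->
  (forall a, a \in s -> a \notin map h t -> F a = 0) ->
  \sum_(a <- s) F a = \sum_(b <- t) F (h b).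
Proof.
move=> s_uniq t_uniq h_inj ts F0.
rewrite -[RHS](big_map h xpredT); apply: perm_big_supp.
apply: uniq_perm; rewrite ?filter_uniq ?map_inj_uniq // => a; rewrite !mem_filter.
have [a_ht|a_nht] := boolP (a \in map h t); first by rewrite (ts a a_ht).
by case: (boolP (a \in s)) => // /F0 /(_ a_nht) ->; rewrite eqxx.
Qed.

Lemma ler_sum_subset (R : numDomainType) (I : eqType) (s t : seq I) (F : I -> R) :
  uniq s -> uniq t -> {subset s <= t} -> (forall a, 0 <= F a) ->
  \sum_(a <- s) F a <= \sum_(a <- t) F a.
Proof.
move=> s_uniq t_uniq st F0; rewrite [leRHS](bigID (mem s)) /= -[leLHS]addr0.
apply: lerD; last exact: sumr_ge0.
have s_filter : perm_eq s [seq a <- t | a \in s].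
  apply: uniq_perm; rewrite ?filter_uniq // => a.
  by rewrite mem_filter andb_idr //; exact: st.
by rewrite (perm_big _ s_filter) big_filter.
Qed.

Section UnitShift.
Variables (R : realType) (H : lmodType R[i]) (d : nat).
Implicit Types (a c m : 'X_{1..d}) (j : 'I_d) (y : 'X_{1..d} -> H).

Definition unit_weights : 'I_d -> 'X_{1..d} -> H -> H := fun _ _ => id.

Definition translate c y : 'X_{1..d} -> H :=
  fun a => if (c <= a)%MM then y (a - c)%MM else 0.

Lemma translate0 y : translate 0%MM y = y.
Proof.
apply: funext => a; rewrite /translate subm0 ifT //.
by apply/mnm_lepP => i; rewrite mnmE.
Qed.

Lemma mshift_translate j c y :
  mshift unit_weights j (translate c y) = translate (c + U_(j))%MM y.
Proof.
apply: funext => a; rewrite /mshift /translate /unit_weights.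
case: eqP => [aj0|/eqP aj0].
  case: ifP => // /mnm_lepP /(_ j); rewrite mnmDE mnm1E eqxx aj0; lia.
have -> : (c <= a - U_(j))%MM = (c + U_(j) <= a)%MM.
  by apply/mnm_lepP/mnm_lepP => le_ca i; move: (le_ca i); rewrite !mnmE;
    case: (j =P i) => [<-|] /=; lia.
by rewrite submDA addmC.
Qed.

Lemma mshift_pow_unit m y : mshift_pow unit_weights m y = translate m y.
Proof.
have foldrE s :
    foldr (fun j z => iter (m j) (mshift unit_weights j) z) (translate 0%MM y) s
    = translate (\sum_(j <- s) U_(j) *+ m j)%MM y.
  elim: s => [|j s IH] /=; first by rewrite big_nil.
  rewrite IH big_cons addmC; elim: (m j) => [|k IHk]; first by rewrite mulm0n addm0.
  by rewrite iterS IHk mshift_translate mulmSr addmA.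
by rewrite /mshift_pow -[y in LHS]translate0 foldrE big_enum -multinomUE_id.
Qed.

Lemma poly_shift_unitE p y a :
  poly_shift unit_weights p y a = \sum_(m <- msupp p) p@_m *: translate m y a.
Proof. by apply: eq_bigr => m _; rewrite mshift_pow_unit. Qed.

End UnitShift.
Arguments unit_weights {R H d}.

Section Twist.
Variables (R : realType) (H : lmodType R[i]) (d : nat).
Variables (A : 'I_d -> 'X_{1..d} -> H -> H) (B : 'X_{1..d} -> H -> H).
Hypothesis B_step : forall a j v, B (a + U_(j))%MM v = A j a (B a v).
Hypothesis B_linear : forall a c x x', B a (c *: x + x') = c *: B a x + B a x'.

Definition twist (y : 'X_{1..d} -> H) : 'X_{1..d} -> H := fun a => B a (y a).

Let B0 a : B a 0 = 0.
Proof. by have := B_linear a (-1) 0 0; rewrite scaleN1r oppr0 addr0 scaleN1r addNr. Qed.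

Let B_sum a I (s : seq I) (c : I -> R[i]) (v : I -> H) :
  B a (\sum_(i <- s) c i *: v i) = \sum_(i <- s) c i *: B a (v i).
Proof.
elim: s => [|i s IH]; first by rewrite !big_nil B0.
by rewrite !big_cons B_linear IH.
Qed.

Lemma mshift_twist j y : mshift A j (twist y) = twist (mshift unit_weights j y).
Proof.
apply: funext => a; rewrite /mshift /twist /unit_weights.
by case: eqP => [_|/eqP aj]; rewrite ?B0 // -B_step submU1K // lt0n.
Qed.

Lemma mshift_pow_twist m y :
  mshift_pow A m (twist y) = twist (mshift_pow unit_weights m y).
Proof.
rewrite /mshift_pow; elim: (enum 'I_d) => //= j s ->.
by elim: (m j) => //= k ->; rewrite mshift_twist.
Qed.

Lemma poly_shift_twist p y :
  poly_shift A p (twist y) = twist (poly_shift unit_weights p y).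
Proof.
apply: funext => a; rewrite /poly_shift {2}/twist B_sum.
by apply: eq_bigr => m _; rewrite mshift_pow_twist.
Qed.

End Twist.

Section PathWeights.
Variables (R : realType) (H : lmodType R[i]) (ip : H -> H -> R[i]) (d : nat).
Variable A : 'I_d -> 'X_{1..d} -> H -> H.
Hypothesis A_comm : forall (i j : 'I_d) a x,
  A i (a + U_(j))%MM (A j a x) = A j (a + U_(i))%MM (A i a x).
Implicit Types (a : 'X_{1..d}) (j : 'I_d).

(* The product of the weights along one lattice path from [0] to [a]; by
   [A_comm] all such paths give the same operator, see [path_weightD1]. *)
Fixpoint path_weight_rec (n : nat) a : H -> H :=
  if n is n'.+1 then
    if [pick j | (0 < a j)%N] is Some j then
      A j (a - U_(j))%MM \o path_weight_rec n' (a - U_(j))%MM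
    else id
  else id.

Definition path_weight a := path_weight_rec (mdeg a) a.

Lemma path_weight0 v : path_weight 0%MM v = v.
Proof. by rewrite /path_weight mdeg0. Qed.

Lemma path_weight_unfold a j : (0 < a j)%N ->
  exists2 k, (0 < a k)%N &
    forall v, path_weight a v = A k (a - U_(k))%MM (path_weight (a - U_(k))%MM v).
Proof.
move=> aj; rewrite /path_weight (mdeg_submU1 aj) /=.
case: pickP => [k ak|/(_ j)]; last by rewrite aj.
by exists k => // v; move: (mdeg_submU1 ak); rewrite (mdeg_submU1 aj) => -[->].
Qed.

Lemma path_weightD1 a j v : path_weight (a + U_(j))%MM v = A j a (path_weight a v).
Proof.
move: {2}(mdeg a) (erefl (mdeg a)) => n; elim/ltn_ind: n a j v => n IH a j v Ea.
have aUj : (0 < (a + U_(j))%MM j)%N by rewrite mnmDE mnm1E eqxx addn1.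
have [k aUk ->] := path_weight_unfold aUj.
have [<-|kj] := eqVneq k j; first by rewrite addmK.
have ak : (0 < a k)%N by move: aUk; rewrite mnmDE mnm1E eq_sym (negbTE kj) addn0.
set a' := (a - U_(k))%MM; have lt_a'n : (mdeg a' < n)%N by rewrite -Ea (mdeg_submU1 ak).
have -> : ((a + U_(j)) - U_(k))%MM = (a' + U_(j))%MM.
  apply/mnmP => i; rewrite /a' !mnmE; case: (k =P i) => [<-|_]; last by rewrite !subn0.
  by rewrite eq_sym (negbTE kj) !addn0.
rewrite (IH _ lt_a'n a' j v erefl) A_comm -(IH _ lt_a'n a' k v erefl).
by rewrite /a' submU1K.
Qed.

Hypothesis A_unitary : forall j a, unitary ip (A j a).

Lemma path_weight_linear a c x y :
  path_weight a (c *: x + y) = c *: path_weight a x + path_weight a y.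
Proof.
elim/multinom_ind: a => [|a j IH]; first by rewrite !path_weight0.
by rewrite !path_weightD1 IH; case: (A_unitary j a).
Qed.

Lemma path_weight_isometry a x : hnorm2 ip (path_weight a x) = hnorm2 ip x.
Proof.
elim/multinom_ind: a => [|a j IH]; first by rewrite path_weight0.
rewrite path_weightD1 -IH /hnorm2; case: (A_unitary j a) => _ _ [V [adj AK _]].
by rewrite adj AK.
Qed.

Lemma path_weight_surj a v : exists w, path_weight a w = v.
Proof.
elim/multinom_ind: a v => [|a j IH] v; first by exists v; rewrite path_weight0.
case: (A_unitary j a) => _ _ [V [_ _ VK]]; have [w wE] := IH (V v).
by exists w; rewrite path_weightD1 wE VK.
Qed.

Lemma l2norm2_twist y : l2norm2 ip (twist path_weight y) = l2norm2 ip y.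
Proof. by apply: eq_esum => a _; rewrite /twist path_weight_isometry. Qed.

End PathWeights.

Lemma sum_expr_unity (F : idomainType) (u : F) n : u ^+ n = 1 ->
  \sum_(k < n) u ^+ k = if u == 1 then n%:R else 0.
Proof.
move=> un1; have [->|u_neq1] := eqVneq u 1.
  by under eq_bigr do rewrite expr1n; rewrite sumr_const card_ord.
have : (u - 1) * \sum_(k < n) u ^+ k = 0 by rewrite -subrX1 un1 subrr.
by move/eqP; rewrite mulf_eq0 subr_eq0 (negbTE u_neq1) => /eqP.
Qed.

Lemma exists_prim_root {C : numClosedFieldType} n :
  (0 < n)%N -> exists z : C, n.-primitive_root z.
Proof.
move=> n_gt0; have [r Xn1E] := closed_field_poly_normal ('X^n - 1 : {poly C}).
rewrite (monicP _) ?monicXnsubC // scale1r in Xn1E.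
have r_unity : all n.-unity_root r by apply/allP => z; rewrite -root_prod_XsubC -Xn1E.
have r_size : (n < (size r).+1)%N by rewrite -(size_prod_XsubC r id) -Xn1E size_XnsubC.
have [|z _] := hasP (has_prim_root n_gt0 r_unity _ r_size); last by exists z.
by rewrite -separable_prod_XsubC -Xn1E separable_Xn_sub_1 // pnatr_eq0 -lt0n.
Qed.

Section RootsOfUnity.
Variables (C : numClosedFieldType) (M : nat) (zeta : C).
Hypothesis zeta_prim : M.-primitive_root zeta.

Lemma norm_prim_root : `|zeta| = 1.
Proof.
apply/eqP; rewrite -(pexpr_eq1 (prim_order_gt0 zeta_prim)) ?normr_ge0 //.
by rewrite -normrX (prim_expr_order zeta_prim) normr1.
Qed.

Lemma prim_root_orthogonal x y : (x < M)%N -> (y < M)%N ->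
  \sum_(k < M) (zeta ^+ k) ^+ x * ((zeta ^+ k) ^+ y)^* = (x == y)%:R * M%:R.
Proof.
move=> xM yM; set u := zeta ^+ x * (zeta ^+ y)^*.
have zeta_unit k : zeta ^+ k * (zeta ^+ k)^* = 1.
  by rewrite -normCK normrX norm_prim_root !expr1n.
have uM : u ^+ M = 1.
  rewrite exprMn -rmorphXn -!exprM !(mulnC _ M) !exprM (prim_expr_order zeta_prim).
  by rewrite !expr1n rmorph1 mulr1.
have u1 : (u == 1) = (x == y).
  apply/eqP/eqP => [u1|xy]; last by rewrite /u xy zeta_unit.
  have : zeta ^+ x = u * zeta ^+ y by rewrite /u -mulrA [_^* * _]mulrC zeta_unit mulr1.
  rewrite u1 mul1r => /eqP.
  by rewrite (eq_prim_root_expr zeta_prim) !modn_small // => /eqP.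
under eq_bigr do rewrite exprAC [(zeta ^+ _) ^+ y]exprAC rmorphXn -exprMn -/u.
by rewrite sum_expr_unity // u1; case: (x == y); rewrite ?mul1r ?mul0r.
Qed.

End RootsOfUnity.

Section MonomialValues.
Variables (C : comNzRingType) (d : nat).
Implicit Types (z : 'I_d -> C) (a b : 'X_{1..d}).

Definition evalX z a : C := \prod_(i < d) z i ^+ a i.

Lemma evalXD z a b : evalX z (a + b)%MM = evalX z a * evalX z b.
Proof. by rewrite /evalX -big_split; apply: eq_bigr => i _; rewrite mnmDE exprD. Qed.

Lemma evalX_scale c z a : evalX (fun i => c * z i) a = c ^+ mdeg a * evalX z a.
Proof.
by rewrite /evalX mdegE -prodrXr -big_split; apply: eq_bigr => i _; rewrite exprMn.
Qed.

End MonomialValues.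

Section Grid.
Variables (C : numClosedFieldType) (d M : nat) (zeta : C).
Hypothesis zeta_prim : M.-primitive_root zeta.

Definition grid_point (t : {ffun 'I_d -> 'I_M}) : 'I_d -> C := fun i => zeta ^+ t i.

Lemma grid_orthogonal a b : a \in box d M -> b \in box d M ->
  \sum_(t : {ffun 'I_d -> 'I_M}) evalX (grid_point t) a * (evalX (grid_point t) b)^*
    = (a == b)%:R * M%:R ^+ d.
Proof.
move=> /mem_boxP aM /mem_boxP bM.
pose F i (k : 'I_M) := (zeta ^+ k) ^+ a i * ((zeta ^+ k) ^+ b i)^*.
transitivity (\sum_(t : {ffun 'I_d -> 'I_M}) \prod_(i < d) F i (t i)).
  by apply: eq_bigr => t _; rewrite /evalX rmorph_prod -big_split.
rewrite -bigA_distr_bigA /= /F.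
under eq_bigr do rewrite (prim_root_orthogonal zeta_prim (aM _) (bM _)).
rewrite big_split prodr_const card_ord /=; congr (_ * _).
have [<-|ab] := eqVneq a b; first by rewrite big1 // => i _; rewrite eqxx.
case: (pickP (fun i => a i != b i)) => [i abi|ab_eq].
  by rewrite (bigD1 i) //= (negbTE abi) mul0r.
by case/eqP: ab; apply/mnmP => i; apply/eqP; rewrite -[_ == _]negbK ab_eq.
Qed.

End Grid.

Section BoxSeries.
Variables (R : realType) (H : lmodType R[i]) (d : nat).
Implicit Types (y : 'X_{1..d} -> H) (z : 'I_d -> R[i]).

Definition box_supported n y := forall a, a \notin box d n -> y a = 0.

Definition box_restrict n y : 'X_{1..d} -> H :=
  fun a => if a \in box d n then y a else 0.

Lemma box_restrict_supported n y : box_supported n (box_restrict n y).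
Proof. by move=> a /negbTE; rewrite /box_restrict => ->. Qed.

Lemma sum_box_widen (V : nmodType) (f : 'X_{1..d} -> H -> V) n M y :
  (forall a, f a 0 = 0) -> box_supported n y -> (n <= M)%N ->
  \sum_(a <- box d M) f a (y a) = \sum_(a <- box d n) f a (y a).
Proof.
move=> f0 y_supp nM.
rewrite (big_reindex_supp (t := box d n) (h := id)) ?box_uniq ?map_id //.
  exact: box_sub.
by move=> a _ /y_supp ->.
Qed.

Definition box_series M z y : H := \sum_(a <- box d M) evalX z a *: y a.

Lemma box_series_translate n k M z m y :
  box_supported n y -> m \in box d k -> (n + k <= M)%N ->
  box_series M z (translate m y) = evalX z m *: box_series M z y.
Proof.
move=> y_supp /mem_boxP mk nkM.
have nM : (n <= M)%N by exact: leq_trans (leq_addr k n) nkM.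
rewrite /box_series (sum_box_widen (f := fun a v => evalX z a *: v) _ y_supp nM);
  last by move=> a; rewrite scaler0.
rewrite (big_reindex_supp (t := box d n) (h := fun b => b + m)%MM) ?box_uniq //.
- rewrite scaler_sumr; apply: eq_bigr => b _.
  by rewrite /translate lem_addl addmK evalXD scalerA mulrC.
- exact: addIm.
- move=> _ /mapP[b /mem_boxP bn ->]; apply/mem_boxP => i; rewrite mnmDE.
  by have := bn i; have := mk i; lia.
- move=> a _ a_notin; rewrite /translate; case: ifP => [ma|_]; last by rewrite scaler0.
  rewrite y_supp ?scaler0 //; apply: contra a_notin => amn.
  by apply/mapP; exists (a - m)%MM; rewrite ?submK.
Qed.

Lemma box_series_poly_shift p n M z y :
  box_supported n y -> (n + msize p <= M)%N ->
  box_series M z (poly_shift unit_weights p y) = meval z p *: box_series M z y.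
Proof.
move=> y_supp nM; rewrite {1}/box_series.
under eq_bigr do rewrite poly_shift_unitE scaler_sumr.
rewrite exchange_big mevalE scaler_suml big_seq [RHS]big_seq; apply: eq_bigr => m mp.
rewrite -scalerA -(box_series_translate z y_supp (msupp_box mp) nM).
by rewrite /box_series scaler_sumr; apply: eq_bigr => a _; rewrite !scalerA mulrC.
Qed.

Lemma box_series_scale M c z y :
  box_series M (fun i => c * z i) y = box_series M z (fun a => c ^+ mdeg a *: y a).
Proof. by apply: eq_bigr => a _; rewrite evalX_scale scalerA mulrC. Qed.

Lemma poly_shift_unit_restrict p n y a : a \in box d n ->
  poly_shift unit_weights p (box_restrict n y) a = poly_shift unit_weights p y a.
Proof.
move=> /mem_boxP an; rewrite !poly_shift_unitE; apply: eq_bigr => m _.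
rewrite /translate /box_restrict; case: ifP => // /mnm_lepP ma; rewrite ifT //.
by apply/mem_boxP => i; rewrite mnmBE; exact: leq_ltn_trans (leq_subr _ _) (an i).
Qed.

End BoxSeries.

Lemma ler_of_exprnM_le (R : realType) (N : nat) (G K : R) :
  (forall r, 0 < r < 1 -> r ^+ N * G <= K) -> G <= K.
Proof.
move=> le_rK; have rG : (fun r : R => r ^+ N * G) @ 1^'- --> G.
  rewrite -[X in _ --> X]mul1r -[X in X * _](expr1n _ N).
  by apply: cvg_at_left_filter; apply: cvgM; [exact: exprn_continuous | exact: cvg_cst].
rewrite -(cvg_lim _ rG) //; apply: limr_le; first exact: cvgP rG.
near=> r; apply: le_rK; apply/andP; split; near: r; last exact: nbhs_left_lt.
exact: nbhs_left_gt.
Unshelve. all: by end_near.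
Qed.

Section UnitShiftVonNeumann.
Variables (R : realType) (H : lmodType R[i]) (ip : H -> H -> R[i]) (d : nat).
Hypothesis ipP : inner_product ip.
Variables (p : {mpoly R[i][d]}) (s : R).
Hypothesis p_le_s :
  forall z : 'I_d -> R[i], (forall j, cabs (z j) < 1) -> cabs (meval z p) <= s.
Local Notation hnorm2 := (hnorm2 ip).
Local Notation S y := (poly_shift unit_weights p y).
Implicit Types (y : 'X_{1..d} -> H).

Lemma polydisc_bound_ge0 : 0 <= s.
Proof.
apply: le_trans (cabs_ge0 _) (p_le_s (z := fun _ => 0) _) => j.
by rewrite (cabs_real (lexx 0)) ltr01.
Qed.

Lemma parseval_grid M (zeta : R[i]) y : M.-primitive_root zeta ->
  \sum_(t : {ffun 'I_d -> 'I_M}) hnorm2 (box_series M (grid_point zeta t) y)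
    = M%:R ^+ d * \sum_(a <- box d M) hnorm2 (y a).
Proof.
move=> zeta_prim; apply: parseval => //; first exact: box_uniq.
by move=> a b aM bM; rewrite grid_orthogonal // rmorphXn rmorph_nat.
Qed.

Lemma poly_shift_unit_weighted_le y n M r :
  box_supported n y -> (n + msize p <= M)%N -> (0 < M)%N -> 0 < r < 1 ->
  \sum_(a <- box d M) r ^+ (2 * mdeg a) * hnorm2 (S y a)
    <= s ^+ 2 * \sum_(a <- box d M) hnorm2 (y a).
Proof.
move=> y_supp nM M_gt0 /andP[r_gt0 r_lt1].
have [zeta zeta_prim] : exists zeta : R[i], M.-primitive_root zeta.
  exact: exists_prim_root.
(* r < 1 keeps the grid inside the open polydisc, where |p| <= s is known. *)
pose z (t : {ffun 'I_d -> 'I_M}) i := r%:C * grid_point zeta t i.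
have z_in_disc t j : cabs (z t j) < 1.
  suff -> : cabs (z t j) = r by [].
  apply: complexI; rewrite -normc_cabs normrM normrX (norm_prim_root zeta_prim).
  by rewrite expr1n mulr1 ger0_norm ?ler0c ?ltW.
have weighted_parseval v : \sum_t hnorm2 (box_series M (z t) v) =
    M%:R ^+ d * \sum_(a <- box d M) r ^+ (2 * mdeg a) * hnorm2 (v a).
  under eq_bigr do rewrite box_series_scale; rewrite parseval_grid //; congr (_ * _).
  apply: eq_bigr => a _; rewrite hnorm2Z // -rmorphXn cabs_real ?exprn_ge0 ?ltW //.
  by rewrite -exprM mulnC.
have Md_gt0 : 0 < M%:R ^+ d :> R by rewrite exprn_gt0 // ltr0n.
rewrite -(ler_pM2l Md_gt0) -weighted_parseval.
apply: (@le_trans _ _ (s ^+ 2 * \sum_t hnorm2 (box_series M (z t) y))).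
  rewrite mulr_sumr; apply: ler_sum => t _.
  rewrite (box_series_poly_shift _ y_supp nM) hnorm2Z //.
  apply: ler_wpM2r; first exact: hnorm2_ge0.
  by apply: lerXn2r; rewrite ?nnegrE ?cabs_ge0 ?polydisc_bound_ge0 ?p_le_s.
rewrite weighted_parseval mulrCA; apply: ler_wpM2l; first exact: ltW.
apply: ler_wpM2l; first exact: sqr_ge0.
rewrite !big_seq; apply: ler_sum => a _.
by rewrite ler_piMl ?hnorm2_ge0 ?exprn_ile1 ?ltW.
Qed.

Lemma poly_shift_unit_box_le y n M :
  box_supported n y -> (n + msize p <= M)%N -> (0 < M)%N ->
  \sum_(a <- box d M) hnorm2 (S y a) <= s ^+ 2 * \sum_(a <- box d M) hnorm2 (y a).
Proof.
move=> y_supp nM M_gt0; apply: (ler_of_exprnM_le (N := 2 * (d * M))) => r r01.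
apply: le_trans (poly_shift_unit_weighted_le y_supp nM M_gt0 r01).
case/andP: r01 => r_gt0 r_lt1; rewrite mulr_sumr !big_seq; apply: ler_sum => a aM.
apply: ler_wpM2r; first exact: hnorm2_ge0.
by apply: ler_wiXn2l; rewrite ?ltW // leq_mul2l mdeg_box ?orbT.
Qed.

Lemma poly_shift_unit_l2 y : (l2norm2 ip (S y) <= (s * s)%:E * l2norm2 ip y)%E.
Proof.
rewrite {1}/l2norm2; apply: ge_ereal_sup => _ [F [F_fin _] <-].
rewrite (fsbig_finite _ _ F_fin) /= sumEFin.
set Fs := finmap.enum_fset (fset_set F); set N := (\max_(a <- Fs) mdeg a).+1.
set M := (N + msize p)%N; set y' := box_restrict N y.
have NM : (N <= M)%N by exact: leq_addr.
have y'_supp : box_supported N y' by exact: box_restrict_supported.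
apply: (@le_trans _ _ ((s * s) * \sum_(a <- box d N) hnorm2 (y a))%:E); last first.
  rewrite EFinM; apply: lee_wpmul2l.
    by rewrite lee_fin mulr_ge0 ?polydisc_bound_ge0.
  apply: esum_ge; exists [set` box d N]; first by split => //; exact: finite_seq.
  by rewrite -fsbig_seq ?box_uniq // sumEFin.
rewrite lee_fin -expr2.
have -> : \sum_(a <- Fs) hnorm2 (S y a) = \sum_(a <- Fs) hnorm2 (S y' a).
  rewrite !big_seq; apply: eq_bigr => a /sub_box aN.
  by rewrite poly_shift_unit_restrict.
have -> : \sum_(a <- box d N) hnorm2 (y a) = \sum_(a <- box d M) hnorm2 (y' a).
  rewrite (sum_box_widen (f := fun _ => hnorm2) _ y'_supp NM) ?hnorm20 //.
  by rewrite !big_seq; apply: eq_bigr => a aN; rewrite /y' /box_restrict aN.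
apply: le_trans (poly_shift_unit_box_le y'_supp (leqnn _) _) => //.
apply: ler_sum_subset; rewrite ?box_uniq ?finmap.fset_uniq //.
  by move=> a /sub_box; exact: box_sub.
by move=> a; exact: hnorm2_ge0.
Qed.

End UnitShiftVonNeumann.

Lemma polydisc_supE (R : realType) (d : nat) (p : {mpoly R[i][d]}) :
  exists2 s : R, polydisc_sup p = s%:E &
    forall z, (forall j, cabs (z j) < 1) -> cabs (meval z p) <= s.
Proof.
have ub z : (forall j, cabs (z j) < 1) -> ((cabs (meval z p))%:E <= polydisc_sup p)%E.
  by move=> z_disc; apply: ereal_sup_ubound; exists z.
have coef_bound : (polydisc_sup p <= (\sum_(m <- msupp p) cabs p@_m)%:E)%E.
  apply: ge_ereal_sup => _ [z z_disc <-]; rewrite lee_fin -lecR -normc_cabs rmorph_sum.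
  rewrite mevalE; apply: le_trans (ler_norm_sum _ _ _) _; apply: ler_sum => m _.
  rewrite normrM normc_cabs ler_piMr ?ler0c ?cabs_ge0 // normr_prod.
  apply: prodr_ile1 => i _; rewrite normrX exprn_ge0 //= exprn_ile1 //.
  by rewrite normc_cabs lecR ltW.
have sup_ge0 : (0 <= polydisc_sup p)%E.
  apply: le_trans (ub (fun _ => 0) _) => [|j]; first by rewrite lee_fin cabs_ge0.
  by rewrite (cabs_real (lexx 0)) ltr01.
move: coef_bound sup_ge0 ub; case: (polydisc_sup p) => [s _ _ ub| //| //].
by exists s => // z z_disc; rewrite -lee_fin; exact: ub.
Qed.

Theorem proposition3p3 (R : realType) (H : lmodType R[i])
  (ip : H -> H -> R[i]) (d : nat) (A : 'I_d -> mpoly.multinom d -> H -> H) :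
  (0 < d)%N ->
  hilbert_space ip ->
  commuting_multishift ip A ->
  (forall (j : 'I_d) (a : mpoly.multinom d), unitary ip (A j a)) ->
  von_neumann_ineq ip A.
Proof.
move=> _ [ipP _] [_ A_comm] A_unitary p x _.
have [s -> p_le_s] := polydisc_supE p.
have [y ->] : exists y, x = twist (path_weight A) y.
  have [y yE] := boolp.choice (fun a => path_weight_surj A_comm A_unitary a (x a)).
  by exists y; apply: funext => a; rewrite /twist yE.
have B_linear := path_weight_linear A_comm A_unitary.
rewrite (poly_shift_twist (path_weightD1 A_comm) B_linear).
rewrite !(l2norm2_twist A_comm A_unitary) -EFinM.
exact: poly_shift_unit_l2.
Qed.
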